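(* Let $\gamma>0$, $\lambda_k\coloneqq-\gamma+ik$ for $k\in\mathbb{N}$, and let $A$ be the diagonal operator on $\ell^2$ given by $A(\zeta_k)=(\lambda_k\zeta_k)$ with domain $D(A)=\{(\zeta_k)\in\ell^2:(\lambda_k\zeta_k)\in\ell^2\}$. Let $A_d\coloneqq(I+A)(I-A)^{-1}$. Then for every $0<\alpha\le1$, \[ \liminf_{n\to\infty}n^{\alpha}\big\|A_d^{\,n^2}(-A)^{-\alpha}\big\|\ge e^{-2\gamma}, \] and moreover there exist $M>0$ and $n_0\in\mathbb{N}$ such that $\|A_d^{\,n}A^{-1}\|\le M/\sqrt{n}$ for all $n\ge n_0$.
   Context: For this diagonal operator, $A_d^{\,n}(-A)^{-\alpha}$ is the diagonal operator with entries $\big(\frac{1+\lambda_k}{1-\lambda_k}\big)^n(-\lambda_k)^{-\alpha}$ (principal branch). *)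

From HB Require Import structures.
From mathcomp Require Import all_boot all_order all_algebra.
From mathcomp Require Import all_classical all_reals all_analysis.
From mathcomp Require Import complex.
Set Implicit Arguments. Unset Strict Implicit. Unset Printing Implicit Defensive.
Import Order.TTheory GRing.Theory Num.Theory.
Local Open Scope ring_scope.
Local Open Scope complex_scope.

Section Defs.
Variable R : realType.

Definition cmod (z : R[i]) : R := let: a +i* b := z in Num.sqrt (a ^+ 2 + b ^+ 2).

(* principal argument in (-pi, pi] (atan2) *)
Definition carg (z : R[i]) : R :=
  let: x +i* y := z in
  if 0 < x then atan (y / x)
  else if x < 0 then (if 0 <= y then atan (y / x) + pi else atan (y / x) - pi)
  else if 0 < y then pi / 2 else if y < 0 then - (pi / 2) else 0.

(* principal branch power z^s = exp(s Log z), s real, z <> 0 (0 for z = 0) *)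
Definition cpow (z : R[i]) (s : R) : R[i] :=
  if z == 0 then 0
  else (expR (s * ln (cmod z)))%:C *
       ((cos (s * carg z))%:C + 'i * (sin (s * carg z))%:C).

Definition l2sq (x : nat -> R[i]) : \bar R :=
  (\sum_(0 <= k <oo) ((cmod (x k)) ^+ 2)%:E)%E.

(* l^2 norm (+oo if the sequence is not in l^2) *)
Definition l2norm (x : nat -> R[i]) : \bar R :=
  match l2sq x with
  | EFin r => (Num.sqrt r)%:E
  | _ => +oo%E
  end.

Definition diag_opnorm (d : nat -> R[i]) : \bar R :=
  ereal_sup [set l2norm (fun k => d k * x k) | x in [set x | (l2norm x <= 1%:E)%E]].

Definition lam (gamma : R) (k : nat) : R[i] := (- gamma)%:C + 'i * (k%:R)%:C.

(* eigenvalues of the Cayley transform A_d = (I + A)(I - A)^{-1} *)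
Definition mu (gamma : R) (k : nat) : R[i] := (1 + lam gamma k) / (1 - lam gamma k).

(* diagonal entries of A_d^n (-A)^{-alpha} *)
Definition entries_frac (gamma alpha : R) (n : nat) (k : nat) : R[i] :=
  mu gamma k ^+ n * cpow (- lam gamma k) (- alpha).

(* diagonal entries of A_d^n A^{-1} *)
Definition entries_inv (gamma : R) (n : nat) (k : nat) : R[i] :=
  mu gamma k ^+ n * (lam gamma k)^-1.

End Defs.

From HB Require Import structures.
From mathcomp Require Import all_boot all_order all_algebra.
From mathcomp Require Import all_classical all_reals all_analysis.
From mathcomp Require Import complex.
From mathcomp Require Import ring lra.
Set Implicit Arguments. Unset Strict Implicit. Unset Printing Implicit Defensive.
Import Order.TTheory GRing.Theory Num.Theory.
Import numFieldNormedType.Exports.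
Local Open Scope ring_scope.

(* Both estimates reduce to explicit computations with the eigenvalues
   lambda_k = -gamma + ik and mu_k = (1 + lambda_k)/(1 - lambda_k) of A_d.
   - The operator norm of a diagonal operator on l^2 is at least the modulus
     of each entry and at most any uniform bound on the entries.
   - |lambda_k|^2 = gamma^2 + k^2 and
     |mu_k|^2 = ((1-gamma)^2 + k^2)/((1+gamma)^2 + k^2).
   - Lower bound: testing the norm of A_d^(n^2) (-A)^(-alpha) on the n-th
     basis vector gives n^alpha |mu_n|^(n^2) |lambda_n|^(-alpha), where
     |mu_n|^(n^2) >= e^(-2 gamma) by (1 + x)^m <= exp(m x), and
     n^alpha |lambda_n|^(-alpha) >= n/|lambda_n| >= 1 - gamma^2/n.  The lower
     bound e^(-2 gamma) (1 - gamma^2/n) tends to e^(-2 gamma), hence so does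
     the liminf.
   - Upper bound: |mu_k|^(2n) = (1 - x)^n <= 1/(1 + n x) with
     x = 4 gamma/((1+gamma)^2 + k^2), which together with the factor
     1/|lambda_k|^2 bounds every entry of A_d^n A^(-1) by
     (1+gamma)^2/(4 gamma^3 n), uniformly in k. *)

Section Modulus.
Variable R : realType.
Local Open Scope complex_scope.
Implicit Types (x y z : R[i]).

Lemma cmodE z : cmod z = Normc.normc z. Proof. by case: z. Qed.

Lemma cmod_ge0 z : 0 <= cmod z. Proof. by case: z => a b; exact: sqrtr_ge0. Qed.

Lemma cmod0 : cmod (0 : R[i]) = 0. Proof. by rewrite cmodE Normc.normc0. Qed.

Lemma cmod1 : cmod (1 : R[i]) = 1. Proof. by rewrite cmodE Normc.normc1. Qed.

Lemma cmod_gt0 z : (0 < cmod z) = (z != 0).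
Proof.
rewrite lt_def cmod_ge0 andbT; apply/idP/idP; apply: contra_neq.
  by move=> ->; rewrite cmod0.
by rewrite cmodE => /Normc.eq0_normc.
Qed.

Lemma cmodM x y : cmod (x * y) = cmod x * cmod y.
Proof. by rewrite !cmodE Normc.normcM. Qed.

Lemma cmodV x : cmod x^-1 = (cmod x)^-1.
Proof. by rewrite !cmodE Normc.normcV. Qed.

Lemma cmodX x n : cmod (x ^+ n) = cmod x ^+ n.
Proof. by elim: n => [|n IH]; rewrite ?cmod1 // !exprS cmodM IH. Qed.

Lemma cmod_sqr (a b : R) : cmod (a +i* b) ^+ 2 = a ^+ 2 + b ^+ 2.
Proof. by rewrite /= sqr_sqrtr // addr_ge0 // sqr_ge0. Qed.

Lemma cmod_cpow z s : z != 0 -> cmod (cpow z s) = cmod z `^ s.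
Proof.
move=> z0; have cz0 : cmod z != 0 by rewrite gt_eqF // cmod_gt0.
rewrite /cpow (negbTE z0) /powR (negbTE cz0) cmodM.
have -> : (cos (s * carg z))%:C + 'i * (sin (s * carg z))%:C =
          cos (s * carg z) +i* sin (s * carg z) by simpc.
by rewrite /= expr0n addr0 sqrtr_sqr ger0_norm ?expR_ge0 // cos2Dsin2 sqrtr1 mulr1.
Qed.

End Modulus.

Section DiagonalOperatorNorm.
Variable R : realType.
Local Open Scope ereal_scope.
Implicit Types (d x : nat -> R[i]).

Lemma l2sq_ge0 x : 0 <= l2sq x.
Proof. by apply: nneseries_ge0 => k _ _; rewrite lee_fin sqr_ge0. Qed.

Lemma l2norm_single x n : (forall k, k != n -> x k = 0%R) -> l2norm x = (cmod (x n))%:E.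
Proof.
move=> x0; rewrite /l2norm /l2sq (@nneseriesD1 R _ n xpredT) //; last first.
  by move=> k _; rewrite lee_fin sqr_ge0.
rewrite eseries0 ?adde0; last by move=> k _ /andP[_ kn]; rewrite x0 // cmod0 expr0n.
by rewrite sqrtr_sqr ger0_norm // cmod_ge0.
Qed.

(* Testing on the n-th basis vector: each entry is bounded by the norm. *)
Lemma diag_opnorm_ge d n : (cmod (d n))%:E <= diag_opnorm d.
Proof.
pose e k : R[i] := if k == n then 1%R else 0%R.
have e0 k : k != n -> e k = 0%R by rewrite /e => /negbTE ->.
apply: ereal_sup_ubound; exists e.
  by rewrite /= (@l2norm_single e n e0) /e eqxx cmod1.
rewrite (@l2norm_single _ n) => [|k kn]; last by rewrite e0 // mulr0.
by rewrite /e eqxx mulr1.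
Qed.

Lemma l2sq_diag_le d x (B : R) : (forall k, cmod (d k) <= B)%R ->
  l2sq (fun k => d k * x k)%R <= (B ^+ 2)%:E * l2sq x.
Proof.
move=> dB; rewrite /l2sq -nneseriesZl; last by move=> k _; rewrite lee_fin sqr_ge0.
apply: lee_nneseries => [k _ _|k _]; first by rewrite lee_fin sqr_ge0.
rewrite -EFinM lee_fin cmodM exprMn ler_wpM2r ?sqr_ge0 //.
by rewrite ler_sqr ?nnegrE ?cmod_ge0 // (le_trans (cmod_ge0 _) (dB k)).
Qed.

Lemma diag_opnorm_le d (B : R) : (0 <= B)%R -> (forall k, cmod (d k) <= B)%R ->
  diag_opnorm d <= B%:E.
Proof.
move=> B0 dB; apply: ge_ereal_sup => _ [x /= x1 <-].
have [r xr] : exists r : R, l2sq x = r%:E.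
  by move: x1; rewrite /l2norm; case: (l2sq x) => // r _; exists r.
have r0 : (0 <= r)%R by rewrite -lee_fin -xr l2sq_ge0.
have r1 : (r <= 1)%R.
  move: x1; rewrite /l2norm xr lee_fin => x1.
  by rewrite -(sqr_sqrtr r0) -[1%R](expr1n _ 2) ler_sqr ?nnegrE ?sqrtr_ge0.
have := l2sq_diag_le x dB; rewrite xr -EFinM /l2norm.
have := l2sq_ge0 (fun k => (d k * x k)%R).
case: (l2sq _) => // s _; rewrite !lee_fin => sB.
rewrite -(ger0_norm B0) -sqrtr_sqr ler_sqrt ?sqr_ge0 //.
by rewrite (le_trans sB) // ler_piMr ?sqr_ge0.
Qed.

End DiagonalOperatorNorm.

Section PowerBounds.
Variable R : realType.
Implicit Types (x : R).

Lemma pow_le_expR x m : 0 <= 1 + x -> (1 + x) ^+ m <= expR (m%:R * x).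
Proof.
by move=> x1; rewrite expRM_natl lerXn2r ?nnegrE ?expR_ge0 ?expR_ge1Dx.
Qed.

Lemma pow_le_inv x n : 0 <= x -> x <= 1 -> (1 - x) ^+ n <= (1 + n%:R * x)^-1.
Proof.
move=> x0 x1; apply: (le_trans (pow_le_expR n _)); first by rewrite subr_ge0.
rewrite mulrN expRN lef_pV2 ?posrE ?expR_gt0 ?expR_ge1Dx //.
by rewrite ltr_pwDl // mulr_ge0.
Qed.

Lemma ratio_le_powR (m c a : R) : 0 < m -> m <= c -> 0 < a -> a <= 1 ->
  m / c <= m `^ a * c `^ (- a).
Proof.
move=> m0 mc a0 a1; have c0 : 0 < c by exact: lt_le_trans mc.
have mc1 : 0 < m / c <= 1 by rewrite divr_gt0 //= ler_pdivrMr ?mul1r.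
apply: (le_trans (ger1_powR mc1 a1)).
have := powRM a (ltW (divr_gt0 m0 c0)) (ltW c0); rewrite divfK ?gt_eqF // => ->.
by rewrite powRN mulfK // gt_eqF // powR_gt0.
Qed.

End PowerBounds.

Section Eigenvalues.
Variables (R : realType) (g : R).
Hypothesis g_gt0 : 0 < g.
Let g_ge0 : 0 <= g := ltW g_gt0.
Local Open Scope complex_scope.

Lemma cmod_lam_sqr k : cmod (lam g k) ^+ 2 = g ^+ 2 + k%:R ^+ 2.
Proof.
by rewrite (_ : lam g k = - g +i* k%:R) ?cmod_sqr ?sqrrN // /lam; simpc.
Qed.

Lemma cmod_Nlam_sqr k : cmod (- lam g k) ^+ 2 = g ^+ 2 + k%:R ^+ 2.
Proof.
by rewrite (_ : - lam g k = g +i* (- k%:R)) ?cmod_sqr ?sqrrN // /lam; simpc.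
Qed.

Lemma Nlam_neq0 k : - lam g k != 0.
Proof.
apply/eqP => l0; have := cmod_Nlam_sqr k; rewrite l0 cmod0 expr0n => /eqP.
by rewrite eq_sym gt_eqF // ltr_wpDr ?sqr_ge0 ?exprn_gt0.
Qed.

Lemma cmod_mu_sqr k :
  cmod (mu g k) ^+ 2 = ((1 - g) ^+ 2 + k%:R ^+ 2) / ((1 + g) ^+ 2 + k%:R ^+ 2).
Proof.
rewrite /mu cmodM cmodV exprMn exprVn.
rewrite (_ : 1 + lam g k = (1 - g) +i* k%:R); last by rewrite /lam; simpc.
rewrite (_ : 1 - lam g k = (1 + g) +i* (- k%:R)); last by rewrite /lam; simpc.
by rewrite !cmod_sqr sqrrN.
Qed.

Lemma mu_pow_ge n : (1 <= n)%N -> expR (- (2 * g)) <= cmod (mu g n) ^+ (n ^ 2).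
Proof.
move=> n1; set a := (1 - g) ^+ 2 + n%:R ^+ 2; set b := (1 + g) ^+ 2 + n%:R ^+ 2.
have n2_gt0 : 0 < n%:R ^+ 2 :> R by rewrite exprn_gt0 // ltr0n.
have a_gt0 : 0 < a by rewrite ltr_wpDl ?sqr_ge0.
have b_gt0 : 0 < b by rewrite ltr_wpDl ?sqr_ge0.
have ba : b / a = 1 + 4 * g / a by rewrite /a /b; field; rewrite gt_eqF.
have x_ge0 : 0 <= 4 * g / a by rewrite divr_ge0 ?mulr_ge0 ?g_ge0 ?(ltW a_gt0).
have mu_inv_pow : (b / a) ^+ (n ^ 2) <= expR (4 * g).
  rewrite ba (le_trans (pow_le_expR _ _)) ?addr_ge0 //.
  rewrite ler_expR natrX mulrCA ler_piMr ?mulr_ge0 ?g_ge0 //.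
  by rewrite ler_pdivrMr // mul1r /a lerDr sqr_ge0.
rewrite -ler_sqr ?nnegrE ?expR_ge0 ?exprn_ge0 ?cmod_ge0 //.
rewrite -expRM_natl exprAC cmod_mu_sqr -/a -/b -invf_div exprVn.
rewrite (_ : 2%:R * - (2 * g) = - (4 * g)); last by ring.
by rewrite expRN lef_pV2 ?posrE ?expR_gt0 ?exprn_gt0 ?divr_gt0.
Qed.

Lemma ratio_Nlam_ge n : (1 <= n)%N -> 1 - g ^+ 2 / n%:R <= n%:R / cmod (- lam g n).
Proof.
move=> n1; set c := cmod (- lam g n); set m : R := n%:R.
have m_gt0 : 0 < m by rewrite ltr0n.
have c_gt0 : 0 < c by rewrite cmod_gt0 Nlam_neq0.
have c_le : c <= m + g ^+ 2.
  rewrite -ler_sqr ?nnegrE ?cmod_ge0 ?addr_ge0 ?sqr_ge0 ?(ltW m_gt0) //.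
  rewrite cmod_Nlam_sqr -/m; set t := g ^+ 2.
  have m1 : 1 <= m by rewrite ler1n.
  have t0 : 0 <= t by rewrite sqr_ge0.
  nra.
have [lhs_le0|lhs_gt0] := leP (1 - g ^+ 2 / m) 0.
  by rewrite (le_trans lhs_le0) // divr_ge0 ?cmod_ge0 ?(ltW m_gt0).
rewrite ler_pdivlMr // (le_trans (ler_wpM2l (ltW lhs_gt0) c_le)) //.
rewrite (_ : (1 - g ^+ 2 / m) * (m + g ^+ 2) = m - (g ^+ 2) ^+ 2 / m).
  by rewrite lerBlDr lerDl divr_ge0 ?sqr_ge0 ?(ltW m_gt0).
by field; rewrite gt_eqF.
Qed.

Lemma entries_frac_ge (alpha : R) n : 0 < alpha -> alpha <= 1 -> (1 <= n)%N ->
  expR (- (2 * g)) * (1 - g ^+ 2 / n%:R) <=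
  n%:R `^ alpha * cmod (entries_frac g alpha (n ^ 2) n).
Proof.
move=> a0 a1 n1; rewrite /entries_frac cmodM cmodX cmod_cpow ?Nlam_neq0 // mulrCA.
set c := cmod (- lam g n).
have n_le_c : n%:R <= c.
  by rewrite -ler_sqr ?nnegrE ?cmod_ge0 // cmod_Nlam_sqr lerDr sqr_ge0.
have Y_ge0 : 0 <= n%:R `^ alpha * c `^ (- alpha) by rewrite mulr_ge0 ?powR_ge0.
rewrite (le_trans _ (ler_wpM2r Y_ge0 (mu_pow_ge n1))) // ler_wpM2l ?expR_ge0 //.
by rewrite (le_trans (ratio_Nlam_ge n1)) // ratio_le_powR // ltr0n.
Qed.

Lemma entries_inv_sqr_le n k : (1 <= n)%N ->
  cmod (entries_inv g n k) ^+ 2 <= (1 + g) ^+ 2 / (4 * g ^+ 3) / n%:R.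
Proof.
move=> n1; rewrite /entries_inv cmodM cmodX cmodV exprMn exprVn exprAC.
rewrite cmod_mu_sqr cmod_lam_sqr.
set K := k%:R ^+ 2; set b := (1 + g) ^+ 2 + K; set c := g ^+ 2 + K.
have K_ge0 : 0 <= K by rewrite sqr_ge0.
have b_gt0 : 0 < b by rewrite ltr_wpDr // exprn_gt0 // addr_gt0.
have c_gt0 : 0 < c by rewrite ltr_wpDr // exprn_gt0.
have n_gt0 : 0 < n%:R :> R by rewrite ltr0n.
have x_gt0 : 0 < 4 * g / b by rewrite divr_gt0 // mulr_gt0.
have mu2 : ((1 - g) ^+ 2 + K) / b = 1 - 4 * g / b.
  by rewrite /b; field; rewrite -/b gt_eqF.
have x_le1 : 4 * g / b <= 1.
  rewrite ler_pdivrMr // mul1r /b; have := sqr_ge0 (1 - g); nra.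
have geom : (1 - 4 * g / b) ^+ n <= b / (4 * g * n%:R).
  have nx_ge0 : 0 <= n%:R * (4 * g / b) by rewrite mulr_ge0 ?(ltW x_gt0).
  rewrite (le_trans (pow_le_inv n (ltW x_gt0) x_le1)) //.
  rewrite -(invf_div (4 * g * n%:R)) lef_pV2 ?posrE ?ltr_pwDl ?divr_gt0 ?mulr_gt0 //.
  by rewrite [4 * g * _]mulrC -!mulrA lerDr.
have bc : b / c <= (1 + g) ^+ 2 / g ^+ 2.
  rewrite ler_pdivrMr // mulrAC ler_pdivlMr ?exprn_gt0 // /b /c.
  have g2 : g ^+ 2 <= (1 + g) ^+ 2 by rewrite ler_sqr ?nnegrE ?addr_ge0 // lerDr.
  nra.
have c_inv_ge0 : 0 <= c^-1 by rewrite invr_ge0 (ltW c_gt0).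
rewrite mu2 (le_trans (ler_wpM2r c_inv_ge0 geom)) //.
rewrite (_ : _ / c = b / c / (4 * g * n%:R)); last by field; rewrite !gt_eqF.
rewrite (le_trans (ler_wpM2r _ bc)) ?invr_ge0 ?mulr_ge0 ?(ltW n_gt0) //.
suff -> : (1 + g) ^+ 2 / (4 * g ^+ 3) / n%:R = (1 + g) ^+ 2 / g ^+ 2 / (4 * g * n%:R) by [].
by field; rewrite !gt_eqF.
Qed.

Lemma entries_inv_le n k : (1 <= n)%N ->
  cmod (entries_inv g n k) <= Num.sqrt ((1 + g) ^+ 2 / (4 * g ^+ 3)) / Num.sqrt n%:R.
Proof.
move=> n1; have C_ge0 : 0 <= (1 + g) ^+ 2 / (4 * g ^+ 3).
  by rewrite divr_ge0 ?sqr_ge0 ?mulr_ge0 ?exprn_ge0.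
rewrite -sqrtrV ?ler0n // -sqrtrM // -[X in X <= _]ger0_norm ?cmod_ge0 //.
by rewrite -sqrtr_sqr ler_sqrt ?(divr_ge0 C_ge0 (ler0n _ n)) // entries_inv_sqr_le.
Qed.

End Eigenvalues.

Section Liminf.
Variable R : realType.
Local Open Scope classical_set_scope.
Local Open Scope ereal_scope.

Lemma limn_einf_ge_cvg (u v : (\bar R)^nat) (l : \bar R) (N : nat) :
  v @ \oo --> l -> (forall n, (N <= n)%N -> v n <= u n) -> l <= limn_einf u.
Proof.
move=> vl vu; rewrite -(cvg_limn_einf_sup vl).1 !limn_einf_lim.
apply: lee_lim; [exact: is_cvg_einfs|exact: is_cvg_einfs|].
near=> n; apply: le_ereal_inf_tmp => _ [m /= nm <-].
apply: (le_trans (ereal_inf_lbound _)); first by exists m.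
by apply: vu; apply: leq_trans nm; near: n; exists N.
Unshelve. all: by end_near. Qed.

Lemma cvg_inv_nat : (fun n : nat => (n%:R : R)^-1)%R @ \oo --> 0%R.
Proof. by rewrite -cvg_shiftS; exact: cvg_harmonic. Qed.

End Liminf.

Theorem mainTheorem9 (R : realType) (gamma : R) (hgamma : 0 < gamma) :
  (forall alpha : R, 0 < alpha -> alpha <= 1 ->
     (limn_einf (fun n : nat =>
        ((n%:R `^ alpha)%:E * diag_opnorm (entries_frac gamma alpha (n ^ 2)))%E)
      >= (expR (- (2 * gamma)))%:E)%E) /\
  (exists (M : R) (n0 : nat), 0 < M /\
     forall n : nat, (n0 <= n)%N ->
       (diag_opnorm (entries_inv gamma n) <= (M / Num.sqrt n%:R)%:E)%E).
Proof.
split.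
- move=> alpha a0 a1; set E := expR (- (2 * gamma)).
  have lower_cvg : ((fun n : nat => (E * (1 - gamma ^+ 2 / n%:R))%:E) @ \oo --> E%:E)%classic.
    apply: cvg_EFin; first exact: nearW.
    have := cvgM (cvg_cst E) (cvgB (cvg_cst (1 : R)) (cvgM (cvg_cst (gamma ^+ 2)) (@cvg_inv_nat R))).
    by rewrite mulr0 subr0 mulr1; apply.
  apply: (limn_einf_ge_cvg lower_cvg (N := 1)) => n n1.
  apply: (le_trans (y := (n%:R `^ alpha * cmod (entries_frac gamma alpha (n ^ 2) n))%:E)).
    by rewrite lee_fin entries_frac_ge.
  by rewrite EFinM lee_pmul ?lee_fin ?powR_ge0 ?cmod_ge0 ?diag_opnorm_ge.
- exists (Num.sqrt ((1 + gamma) ^+ 2 / (4 * gamma ^+ 3))), 1%N; split.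
    by rewrite sqrtr_gt0 divr_gt0 ?exprn_gt0 ?mulr_gt0 ?addr_gt0.
  move=> n n1; apply: diag_opnorm_le; last by move=> k; exact: entries_inv_le.
  by rewrite divr_ge0 ?sqrtr_ge0.
Qed.
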